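(* For every integer $n\ge 2$, with $$q(n,k)=\sum_{\overline{A}\in\overline{\mathfrak{B}}_{n,k}}|\overline{A}|\prod_{i=0}^{n-2}\left[(n-i)!\right]^{\psi_i(\overline{A})},$$ one has $q(n,0)=q(n,1)=(n!)^{2n}=|\Pi_n|=|\Sigma_{n^2}|$.
   Context: $[n]=\{1,\dots,n\}$. $\mathfrak{B}_n$ is the set of $n\times n$ binary matrices and $\mathfrak{B}_{n,k}$ those with exactly $k$ ones. For $A\in\mathfrak{B}_n$, $r_k(A)$ (resp. $c_k(A)$) is the number of rows (resp. columns) of $A$ with exactly $k$ ones and $\psi_k(A)=r_k(A)+c_k(A)$. $A\sim B$ iff $B$ is obtained from $A$ by permuting rows; $\overline{A}$ is the equivalence class of $A$, $|\overline{A}|$ its cardinality, $\overline{\mathfrak{B}}_{n,k}=\mathfrak{B}_{n,k}/\!\sim$; $\psi_k$ is defined on classes via representatives. $\Pi_n$ is the set of all $n\times n$ matrices whose entries are ordered pairs $\langle i,j\rangle$, $i,j\in[n]$, such that in each row the first coordinates form a permutation of $[n]$ and in each column the second coordinates form a permutation of $[n]$. $\Sigma_{n^2}$ is the set of $n^2\times n^2$ binary matrices which, when partitioned into $n^2$ consecutive $n\times n$ blocks, contain exactly one $1$ in each row, each column and each block. *)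

From HB Require Import structures.
From mathcomp Require Import all_boot all_order all_fingroup all_algebra.
Set Implicit Arguments. Unset Strict Implicit. Unset Printing Implicit Defensive.

(* B_n : n x n binary matrices, represented as 'M[bool]_n (true = 1). *)
Definition ones n (A : 'M[bool]_n) : nat := #|[set ij : 'I_n * 'I_n | A ij.1 ij.2]|.

Definition Bnk n k : {set 'M[bool]_n} := [set A | ones A == k].

Definition rk n k (A : 'M[bool]_n) : nat := #|[set i : 'I_n | #|[set j | A i j]| == k]|.
Definition ck n k (A : 'M[bool]_n) : nat := #|[set j : 'I_n | #|[set i | A i j]| == k]|.
Definition psi n k (A : 'M[bool]_n) : nat := rk k A + ck k A.

Definition rclass n (A : 'M[bool]_n) : {set 'M[bool]_n} :=
  [set B | [exists s : 'S_n, B == row_perm s A]].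

Definition classes n k : {set {set 'M[bool]_n}} := [set rclass A | A in Bnk n k].

Definition rep n (C : {set 'M[bool]_n}) : 'M[bool]_n :=
  odflt (const_mx false) [pick A in C].

Definition q n k : nat :=
  \sum_(C in classes n k)
     #|C| * \prod_(0 <= i < n.-1) ((n - i)`!) ^ (psi i (rep C)).

Definition Pi n : {set 'M[('I_n * 'I_n)%type]_n} :=
  [set M : 'M[('I_n * 'I_n)%type]_n | [forall i, injectiveb (fun j => (M i j).1)] &&
           [forall j, injectiveb (fun i => (M i j).2)]].

Definition Sigma n : {set 'M[bool]_(n ^ 2)} :=
  [set M : 'M[bool]_(n ^ 2) | [&& [forall i, #|[set j | M i j]| == 1],
               [forall j, #|[set i | M i j]| == 1] &
               [forall b : 'I_n * 'I_n,
                  #|[set ij : 'I_(n ^ 2) * 'I_(n ^ 2) |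
                       [&& M ij.1 ij.2, ij.1 %/ n == b.1 & ij.2 %/ n == b.2]]| == 1]]].

(* An element of Pi_n is the same thing as two families of n permutations of [n]:
   the first coordinates along each row and the second coordinates along each
   column, whence |Pi_n| = (n!)^(2n).  Cutting an n^2 x n^2 matrix into n x n
   blocks, a Sigma matrix is determined by the position <r, c> of the single 1
   in each block (a, b); the row and column conditions say exactly that these
   positions form an element of Pi_n, so |Sigma_{n^2}| = |Pi_n|.
   B_{n,0} is the single class of the zero matrix, for which psi_0 = 2n.
   B_{n,1} consists of n classes (one per column holding the 1) of n matrices
   each, all with psi_0 = 2(n-1), psi_1 = 2 and psi_i = 0 otherwise, so
   q(n,1) = n^2 (n!)^(2n-2) ((n-1)!)^2 = (n!)^(2n). *)

From Pilot Require Import Defs.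
From mathcomp Require Import all_boot all_order all_fingroup all_algebra.
From mathcomp Require Import zify.
Set Implicit Arguments. Unset Strict Implicit.

Lemma perm_eqV (T : finType) (s : {perm T}) x y : (s x == y) = (x == (s^-1)%g y).
Proof. by apply/eqP/eqP => [<-|->]; rewrite ?permK ?permKV. Qed.

Lemma pick_card1 (T : finType) (P : pred T) x0 :
  #|[set x | P x]| == 1 -> forall y, P y = (y == odflt x0 [pick x | P x]).
Proof.
move=> /cards1P [x Px1].
have Px y : P y = (y == x) by rewrite -in_set1 -Px1 inE.
case: pickP => [z|/(_ x)]; last by rewrite Px eqxx.
by rewrite Px => /eqP ->.
Qed.

Lemma card1_uniq (T : finType) (P : pred T) x y :
  #|[set z | P z]| == 1 -> P x -> P y -> x = y.
Proof.
move=> P1; have PE := pick_card1 x P1.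
by rewrite (PE x) (PE y) => /eqP Px /eqP Py; rewrite Px Py.
Qed.

Definition pi_mx n (fg : {ffun 'I_n -> 'S_n} * {ffun 'I_n -> 'S_n}) :
  'M[('I_n * 'I_n)%type]_n := \matrix_(i, j) (fg.1 i j, fg.2 j i).

Lemma pi_mx_inj n : injective (@pi_mx n).
Proof.
move=> [f g] [f' g'] /matrixP eq_fg; congr pair; apply/ffunP => i; apply/permP => j.
- by have := eq_fg i j; rewrite !mxE => -[].
- by have := eq_fg j i; rewrite !mxE => -[].
Qed.

Lemma Pi_pi_mx n : Pi n = @pi_mx n @: setT.
Proof.
apply/setP => M; rewrite inE; apply/andP/imsetP => [[/forallP rowM /forallP colM]|].
- pose f := [ffun i => perm (injectiveP _ (rowM i))].
  pose g := [ffun j => perm (injectiveP _ (colM j))].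
  exists (f, g) => //; apply/matrixP => i j.
  by rewrite !mxE !ffunE !permE; case: (M i j).
- move=> [[f g] _ ->]; split; apply/forallP => i; apply/injectiveP => a b;
    rewrite !mxE; exact: perm_inj.
Qed.

Lemma card_Pi n : #|Pi n| = n`! ^ (2 * n).
Proof.
rewrite Pi_pi_mx card_imset; last exact: pi_mx_inj.
by rewrite cardsT card_prod !card_ffun !card_Sn !card_ord -expnD addnn -mul2n.
Qed.

Section BlockMatrices.

Variable n : nat.
Hypothesis n_gt0 : 0 < n.

Lemma blk_index_subproof (a r : 'I_n) : a * n + r < n ^ 2.
Proof. have := ltn_ord a; have := ltn_ord r; nia. Qed.

Definition blk_index (a r : 'I_n) : 'I_(n ^ 2) := Ordinal (blk_index_subproof a r).

Lemma blk_subproof (i : 'I_(n ^ 2)) : i %/ n < n.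
Proof. by rewrite ltn_divLR // -expnSr ltn_ord. Qed.

Lemma pos_subproof (i : 'I_(n ^ 2)) : i %% n < n.
Proof. by rewrite ltn_pmod. Qed.

Definition blk (i : 'I_(n ^ 2)) : 'I_n := Ordinal (blk_subproof i).
Definition pos (i : 'I_(n ^ 2)) : 'I_n := Ordinal (pos_subproof i).

Lemma blk_index_blk a r : blk (blk_index a r) = a.
Proof. by apply: val_inj; rewrite /= divnMDl // divn_small ?addn0. Qed.

Lemma blk_index_pos a r : pos (blk_index a r) = r.
Proof. by apply: val_inj; rewrite /= modnMDl modn_small. Qed.

Lemma blk_indexK i : blk_index (blk i) (pos i) = i.
Proof. by apply: val_inj; rewrite /= -divn_eq. Qed.

Lemma eq_blk_index i a r : (i == blk_index a r) = (blk i == a) && (pos i == r).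
Proof.
apply/eqP/andP => [->|[/eqP <- /eqP <-]]; last by rewrite blk_indexK.
by rewrite blk_index_blk blk_index_pos.
Qed.

Lemma eq_pos_in_blk i j : blk i = blk j -> (i == j) = (pos i == pos j).
Proof.
move=> eq_blk; apply/eqP/eqP => [-> //|eq_pos].
by rewrite -(blk_indexK i) eq_blk eq_pos blk_indexK.
Qed.

Definition sudoku_mx (M : 'M[('I_n * 'I_n)%type]_n) : 'M[bool]_(n ^ 2) :=
  \matrix_(i, j) (M (blk i) (blk j) == (pos i, pos j)).

Lemma sudoku_mx_inj : injective sudoku_mx.
Proof.
move=> M M' /matrixP eqM; apply/matrixP => a b.
have := eqM (blk_index a (M a b).1) (blk_index b (M a b).2).
rewrite !mxE !blk_index_blk !blk_index_pos -surjective_pairing eqxx.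
by move/esym/eqP.
Qed.

Lemma sudoku_mx_Sigma M : M \in Pi n -> sudoku_mx M \in Sigma n.
Proof.
rewrite Pi_pi_mx => /imsetP [[f g] _ ->]; rewrite inE; apply/and3P; split.
- apply/forallP => i; pose b := ((f (blk i))^-1 (pos i))%g.
  apply/cards1P; exists (blk_index b (g b (blk i))); apply/setP => j.
  rewrite !inE !mxE xpair_eqE eq_blk_index perm_eqV -/b.
  by case: (blk j =P b) => [->|]; rewrite 1?eq_sym.
- apply/forallP => j; pose a := ((g (blk j))^-1 (pos j))%g.
  apply/cards1P; exists (blk_index a (f a (blk j))); apply/setP => i.
  rewrite !inE !mxE xpair_eqE eq_blk_index andbC perm_eqV -/a.
  by case: (blk i =P a) => [->|]; rewrite 1?eq_sym.
- apply/forallP => -[a b]; apply/cards1P.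
  exists (blk_index a (f a b), blk_index b (g b a)); apply/setP => -[i j].
  rewrite !inE !mxE /= !xpair_eqE !eq_blk_index.
  have blkE (k : 'I_(n ^ 2)) (c : 'I_n) : (k %/ n == c) = (blk k == c) by [].
  rewrite !blkE.
  case: (blk i =P a) => [->|]; last by rewrite !andbF.
  case: (blk j =P b) => [->|]; last by rewrite !andbF.
  by rewrite /= !andbT [f a b == _]eq_sym [g b a == _]eq_sym.
Qed.

Lemma Sigma_sudoku_mx S : S \in Sigma n -> exists2 M, M \in Pi n & S = sudoku_mx M.
Proof.
rewrite inE => /and3P [/forallP rowS /forallP colS /forallP blkS].
pose in_blk a b (ij : 'I_(n ^ 2) * 'I_(n ^ 2)) := [&& S ij.1 ij.2, blk ij.1 == a & blk ij.2 == b].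
pose cell a b := odflt (blk_index a a, blk_index b b) [pick ij | in_blk a b ij].
have cellE a b ij : in_blk a b ij = (ij == cell a b) by apply: pick_card1; exact: (blkS (a, b)).
have cellP a b : [/\ S (cell a b).1 (cell a b).2, blk (cell a b).1 = a & blk (cell a b).2 = b].
  by have /and3P [? /eqP ? /eqP ?] : in_blk a b (cell a b) by rewrite cellE.
have row_inj a : injective (fun b => pos (cell a b).1).
  move=> b b' /= eq_pos; have [Sb ra cb] := cellP a b; have [Sb' ra' cb'] := cellP a b'.
  have same_row : (cell a b).1 = (cell a b').1.
    by apply/eqP; rewrite eq_pos_in_blk ?ra ?ra' ?eq_pos.
  rewrite -cb -cb'; congr blk.
  by apply: card1_uniq (rowS (cell a b).1) Sb _; rewrite same_row.
have col_inj b : injective (fun a => pos (cell a b).2).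
  move=> a a' /= eq_pos; have [Sa ra cb] := cellP a b; have [Sa' ra' cb'] := cellP a' b.
  have same_col : (cell a b).2 = (cell a' b).2.
    by apply/eqP; rewrite eq_pos_in_blk ?cb ?cb' ?eq_pos.
  rewrite -ra -ra'; congr blk.
  by apply: card1_uniq (colS (cell a b).2) Sa _; rewrite same_col.
pose M : 'M[('I_n * 'I_n)%type]_n := (\matrix_(a, b) (pos (cell a b).1, pos (cell a b).2))%R.
exists M.
- rewrite inE; apply/andP; split; apply/forallP => a; apply/injectiveP => b b'; rewrite !mxE.
  + exact: row_inj.
  + exact: col_inj.
- apply/matrixP => i j; rewrite !mxE.
  have [_ blk1 blk2] := cellP (blk i) (blk j).
  have := cellE (blk i) (blk j) (i, j); rewrite /in_blk /= !eqxx !andbT => ->.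
  by rewrite !xpair_eqE -!eq_pos_in_blk // (eq_sym i) (eq_sym j).
Qed.

Lemma Sigma_sudoku_mx_Pi : Sigma n = sudoku_mx @: Pi n.
Proof.
apply/setP => S; apply/idP/imsetP => [/Sigma_sudoku_mx //|[M PiM ->]].
exact: sudoku_mx_Sigma.
Qed.

Lemma card_Sigma : #|Sigma n| = n`! ^ (2 * n).
Proof. by rewrite Sigma_sudoku_mx_Pi card_imset ?card_Pi //; apply: sudoku_mx_inj. Qed.

End BlockMatrices.

Definition weight n (A : 'M[bool]_n) : nat := \prod_(0 <= i < n.-1) (n - i)`! ^ psi i A.

Lemma qE n k : q n k = \sum_(C in Defs.classes n k) #|C| * weight (rep C).
Proof. by []. Qed.

Lemma weight_psi01 n (A : 'M[bool]_n) : 1 < n -> (forall i, 1 < i -> psi i A = 0) ->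
  weight A = n`! ^ psi 0 A * n.-1`! ^ psi 1 A.
Proof.
case: n A => [|[|m]] // A _ psi_gt1; rewrite /weight big_ltn // subn0 /=.
case: m A psi_gt1 => [|m] A psi_gt1; first by rewrite big_geq // exp1n.
rewrite big_ltn // big_nat_cond big1 ?muln1 // => i /andP [/andP [lt1i _] _].
by rewrite psi_gt1.
Qed.

Lemma rep_in n (C : {set 'M[bool]_n}) A : A \in C -> rep C \in C.
Proof. by rewrite /rep; case: pickP => [//|/(_ A) ->]. Qed.

Definition zero_bmx n : 'M[bool]_n := const_mx false.

Lemma Bnk0 n : Bnk n 0 = [set zero_bmx n].
Proof.
apply/setP => A; rewrite !inE /ones cards_eq0; apply/eqP/eqP => [A0|->].
- apply/matrixP => a b; rewrite mxE; apply/negbTE/negP => Aab.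
  by have := in_set0 (a, b); rewrite -A0 inE Aab.
- by apply/setP => ij; rewrite !inE mxE.
Qed.

Lemma rclass_zero n : rclass (zero_bmx n) = [set zero_bmx n].
Proof.
have row_perm0 (s : 'S_n) : row_perm s (zero_bmx n) = zero_bmx n.
  by apply/matrixP => a b; rewrite !mxE.
apply/setP => B; rewrite !inE; apply/existsP/eqP => [[s /eqP ->] //|->].
by exists 1%g; rewrite row_perm0.
Qed.

Lemma classes0 n : Defs.classes n 0 = [set [set zero_bmx n]].
Proof. by rewrite /Defs.classes Bnk0 imset_set1 rclass_zero. Qed.

Lemma psi_zero n k : psi k (zero_bmx n) = if k == 0 then 2 * n else 0.
Proof.
have lines0 (P : 'I_n -> 'I_n -> bool) : (forall a b, P a b = false) ->
    #|[set a | #|[set b | P a b]| == k]| = if k == 0 then n else 0.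
  move=> P0; have -> : [set a | #|[set b | P a b]| == k] = [set a | k == 0].
    apply/setP => a; rewrite !inE (_ : [set b | P a b] = set0) ?cards0 1?eq_sym //.
    by apply/setP => b; rewrite !inE P0.
  case: eqP => _; last by apply/eqP; rewrite cards_eq0; apply/eqP/setP => a; rewrite !inE.
  by rewrite -[RHS]card_ord; apply: eq_card => a; rewrite inE.
rewrite /psi /rk /ck !lines0 => [|a b|a b]; rewrite ?mxE //.
by case: (k == 0); rewrite ?mul2n ?addnn.
Qed.

Definition unit_bmx n (i j : 'I_n) : 'M[bool]_n := \matrix_(a, b) ((a == i) && (b == j)).

Lemma card_indicator n (i : 'I_n) k :
  #|[set a : 'I_n | (a == i : nat) == k]| = if k == 0 then n.-1 else if k == 1 then 1 else 0.
Proof.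
case: k => [|[|k]] /=.
- rewrite -[in RHS](card_ord n) -(cardsC1 i); apply: eq_card => a; rewrite !inE.
  by case: (a == i).
- rewrite -[RHS](cards1 i); apply: eq_card => a; rewrite !inE; by case: (a == i).
- apply/eqP; rewrite cards_eq0; apply/eqP/setP => a; rewrite !inE; by case: (a == i).
Qed.

Lemma card_unit_bmx_row n (i j a : 'I_n) : #|[set b | unit_bmx i j a b]| = (a == i).
Proof.
have [->|ne_ai] := eqVneq a i.
- by rewrite /= -(cards1 j); apply: eq_card => b; rewrite !inE mxE eqxx.
- apply/eqP; rewrite cards_eq0; apply/eqP/setP => b.
  by rewrite !inE mxE (negbTE ne_ai).
Qed.

Lemma card_unit_bmx_col n (i j b : 'I_n) : #|[set a | unit_bmx i j a b]| = (b == j).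
Proof.
have [->|ne_bj] := eqVneq b j.
- by rewrite /= -(cards1 i); apply: eq_card => a; rewrite !inE mxE eqxx andbT.
- apply/eqP; rewrite cards_eq0; apply/eqP/setP => a.
  by rewrite !inE mxE (negbTE ne_bj) andbF.
Qed.

Lemma psi_unit n (i j : 'I_n) k :
  psi k (unit_bmx i j) = if k == 0 then 2 * n.-1 else if k == 1 then 2 else 0.
Proof.
rewrite /psi /rk /ck.
have -> : [set a | #|[set b | unit_bmx i j a b]| == k] = [set a | (a == i : nat) == k].
  by apply/setP => a; rewrite !inE card_unit_bmx_row.
have -> : [set b | #|[set a | unit_bmx i j a b]| == k] = [set b | (b == j : nat) == k].
  by apply/setP => b; rewrite !inE card_unit_bmx_col.
by rewrite !card_indicator; case: k => [|[|k]] //=; rewrite mul2n addnn.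
Qed.

Lemma q0 n : 1 < n -> q n 0 = n`! ^ (2 * n).
Proof.
move=> lt1n; rewrite qE classes0 big_set1 cards1 mul1n.
have /set1P -> := rep_in (set11 (zero_bmx n)).
rewrite weight_psi01 // => [|i lt1i]; last by rewrite psi_zero; case: i lt1i.
by rewrite !psi_zero /= muln1.
Qed.

Definition column_class n (j : 'I_n) : {set 'M[bool]_n} := [set unit_bmx a j | a : 'I_n].

Lemma unit_bmx_inj n (i j i' j' : 'I_n) : unit_bmx i j = unit_bmx i' j' -> i = i' /\ j = j'.
Proof. by move/matrixP/(_ i j); rewrite !mxE !eqxx => /esym/andP [/eqP -> /eqP ->]. Qed.

Lemma row_perm_unit_bmx n (s : 'S_n) i j : row_perm s (unit_bmx i j) = unit_bmx (s^-1 i)%g j.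
Proof.
apply/matrixP => a b; rewrite !mxE; congr (_ && _).
by apply/eqP/eqP => [<-|->]; rewrite ?permK ?permKV.
Qed.

Lemma rclass_unit_bmx n (i j : 'I_n) : rclass (unit_bmx i j) = column_class j.
Proof.
apply/setP => B; rewrite !inE; apply/existsP/imsetP => [[s /eqP ->]|[a _ ->]].
- by rewrite row_perm_unit_bmx; exists (s^-1 i)%g.
- by exists (tperm i a); rewrite row_perm_unit_bmx tpermV tpermL.
Qed.

Lemma Bnk1P n (A : 'M[bool]_n) : reflect (exists i j, A = unit_bmx i j) (A \in Bnk n 1).
Proof.
rewrite inE /ones; apply: (iffP cards1P) => [[[i j] A1]|[i [j ->]]].
- exists i, j; apply/matrixP => a b; rewrite mxE.
  by move/setP/(_ (a, b)): A1; rewrite !inE xpair_eqE.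
- by exists (i, j); apply/setP => -[a b]; rewrite !inE mxE xpair_eqE.
Qed.

Lemma classes1 n : Defs.classes n 1 = [set column_class j | j : 'I_n].
Proof.
apply/setP => C; apply/imsetP/imsetP => [[A /Bnk1P [i [j ->]] ->]|[j _ ->]].
- by exists j; rewrite ?rclass_unit_bmx.
- by exists (unit_bmx j j); [apply/Bnk1P; exists j, j | rewrite rclass_unit_bmx].
Qed.

Lemma unit_bmx_column_class n (a j : 'I_n) : unit_bmx a j \in column_class j.
Proof. exact: imset_f. Qed.

Lemma column_class_inj n : injective (@column_class n).
Proof.
move=> j j' eq_jj'; have := unit_bmx_column_class j j; rewrite eq_jj'.
by case/imsetP => a _ /unit_bmx_inj [].
Qed.

Lemma card_column_class n (j : 'I_n) : #|column_class j| = n.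
Proof. by rewrite card_imset ?card_ord // => a a' /unit_bmx_inj []. Qed.

Lemma weight_unit_bmx n (i j : 'I_n) : 1 < n ->
  weight (unit_bmx i j) = n`! ^ (2 * n.-1) * n.-1`! ^ 2.
Proof.
move=> lt1n; rewrite weight_psi01 // => [|k lt1k]; first by rewrite !psi_unit.
by rewrite psi_unit; case: k lt1k => [|[|k]].
Qed.

Lemma factS_expn2 m : m.+1 * (m.+1 * (m.+1`! ^ (2 * m) * m`! ^ 2)) = m.+1`! ^ (2 * m.+1).
Proof.
have fact_sq : m.+1`! ^ 2 = m.+1 * m.+1 * m`! ^ 2 by rewrite factS expnMn mulnn.
rewrite mulnS expnD fact_sq; nia.
Qed.

Lemma q1 n : 1 < n -> q n 1 = n`! ^ (2 * n).
Proof.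
move=> lt1n; rewrite qE classes1 big_imset /=; last by move=> j j' _ _ /column_class_inj.
rewrite (eq_bigr (fun=> n * (n`! ^ (2 * n.-1) * n.-1`! ^ 2))) => [|j _]; last first.
  have /imsetP [a _ ->] := rep_in (unit_bmx_column_class j j).
  by rewrite card_column_class weight_unit_bmx.
by rewrite sum_nat_const card_ord; case: n lt1n => // m _; rewrite factS_expn2.
Qed.

Unset Implicit Arguments.

Theorem mainTheorem4 (n : nat) : 2 <= n ->
  [/\ q n 0 = (n`!) ^ (2 * n),
      q n 1 = (n`!) ^ (2 * n),
      #|Pi n| = (n`!) ^ (2 * n) &
      #|Sigma n| = (n`!) ^ (2 * n)].
Proof.
move=> lt1n; split; [exact: q0 | exact: q1 | exact: card_Pi | exact: card_Sigma (ltnW lt1n)].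
Qed.
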